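(* Let $G$ be a periodic group and let $N$ be a normal subgroup of $G$. Assume that for every $x\in G$ the subgroup $[N,x]$ is a Chernikov group, and let $R_x$ denote its radicable part. Then the subgroup $R$ generated by all the subgroups $R_x$ ($x\in G$) is a radicable abelian normal subgroup of $G$.
   Context: For a subgroup $N$ and element $x$ of a group $G$, $[N,x]$ is the subgroup generated by all commutators $[a,x]=a^{-1}x^{-1}ax$ with $a\in N$. A group is radicable if every equation $x^r=a$ ($r$ a positive integer, $a$ in the group) has a solution in the group. A Chernikov group $H$ has a radicable abelian normal subgroup $R$ (its radicable part) which is a direct product of finitely many Prüfer groups $C_{p^\infty}$ and with $H/R$ finite. *)

From HB Require Import structures.
From mathcomp Require Import all_boot all_order all_algebra algC.

Set Implicit Arguments.
Unset Strict Implicit.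
Unset Printing Implicit Defensive.

(* Possibly infinite groups: MathComp's [groupType] (boot/monoid.v).
   Subsets of a group are Prop-valued predicates [T -> Prop]. *)
Local Open Scope group_scope.

Section GroupDefs.
Variable T : groupType.

Definition subset (A B : T -> Prop) : Prop := forall x, A x -> B x.

Definition is_subgroup (H : T -> Prop) : Prop :=
  [/\ H 1, (forall x y, H x -> H y -> H (x * y)) & (forall x, H x -> H x^-1)].

Definition generated (A : T -> Prop) : T -> Prop :=
  fun x => forall H, is_subgroup H -> subset A H -> H x.

(* [N, x] = < [a, x] | a in N >, with [a, x] = a^-1 x^-1 a x *)
Definition commN (N : T -> Prop) (x : T) : T -> Prop :=
  generated (fun c => exists a, N a /\ c = [~ a, x]).

Definition periodic_group : Prop := forall x : T, exists n, (0 < n)%N /\ x ^+ n = 1.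

Definition normal_subgroup (K : T -> Prop) : Prop :=
  is_subgroup K /\ forall g k, K k -> K (k ^ g).

Definition normal_in (K H : T -> Prop) : Prop :=
  [/\ is_subgroup K, subset K H & forall h k, H h -> K k -> K (k ^ h)].

Definition abelian_subgroup (H : T -> Prop) : Prop :=
  forall a b, H a -> H b -> a * b = b * a.

Definition radicable (H : T -> Prop) : Prop :=
  forall (r : nat) a, (0 < r)%N -> H a -> exists y, H y /\ y ^+ r = a.

(* Prüfer group C_{p^oo}, modelled as the multiplicative group of all complex
   p-power roots of unity (in algC); P is a Prüfer p-subgroup if it is the
   image of an injective multiplicative map from that group. *)
Definition pPowerRoot (p : nat) (z : algC) : Prop :=
  exists n : nat, (z ^+ (expn p n))%R = 1%R.

Definition prufer (p : nat) (P : T -> Prop) : Prop :=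
  prime p /\
  exists f : algC -> T,
    [/\ (forall z w, pPowerRoot p z -> pPowerRoot p w -> f z = f w -> z = w),
        (forall z w, pPowerRoot p z -> pPowerRoot p w -> f (z * w)%R = f z * f w),
        (forall z, pPowerRoot p z -> P (f z)) &
        (forall y, P y -> exists2 z, pPowerRoot p z & f z = y)].

Fixpoint gprod (n : nat) (f : nat -> T) : T :=
  match n with
  | 0 => 1
  | n'.+1 => gprod n' f * f n'
  end.

Definition dprod_prufer (R : T -> Prop) : Prop :=
  exists (k : nat) (ps : nat -> nat) (P : nat -> T -> Prop),
    [/\ (forall i, (i < k)%N -> prufer (ps i) (P i)),
        (forall i j a b, (i < k)%N -> (j < k)%N -> i <> j -> P i a -> P j b ->
            a * b = b * a),
        (forall x, R x <-> exists f : nat -> T,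
             (forall i, (i < k)%N -> P i (f i)) /\ x = gprod k f) &
        (forall f g : nat -> T,
             (forall i, (i < k)%N -> P i (f i)) ->
             (forall i, (i < k)%N -> P i (g i)) ->
             gprod k f = gprod k g -> forall i, (i < k)%N -> f i = g i)].

Definition finite_index (R H : T -> Prop) : Prop :=
  exists s : seq T, forall h, H h -> exists t, t \in s /\ R (t^-1 * h).

(* H is a Chernikov group and R is its radicable part: R is a radicable abelian
   normal subgroup of H which is a direct product of finitely many Prüfer
   groups, with H/R finite. *)
Definition chernikov_radicable_part (H R : T -> Prop) : Prop :=
  [/\ normal_in R H, abelian_subgroup R, radicable R, dprod_prufer R
    & finite_index R H].

End GroupDefs.

From Pilot Require Import Defs.
From mathcomp Require Import all_boot all_algebra algC.
From Stdlib Require Import ClassicalEpsilon.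

Set Implicit Arguments.
Unset Strict Implicit.
Unset Printing Implicit Defensive.

Import GRing.Theory.

Local Open Scope group_scope.

(* If a subgroup R has finitely many (m) cosets in H, then z^(m!) lies in R for
   every z in H; hence a radicable subgroup of H lies in R, so R_x is the
   largest radicable subgroup of [N,x]. Consequently conjugation permutes the
   R_x (R_x^g = R_(x^g)), and since R_x <= N normalises every [N,y], every R_x
   normalises every R_y. Let a in R_x, b in R_y with b^n = 1, and let m bound
   the number of elements of R_y of order dividing n (a direct product of
   finitely many Pruefer groups has finitely many of them). Choose c in R_x
   with c^(m!) = a; the conjugates of b by the powers of c all lie in that
   finite set, so some c^e with 0 < e <= m centralises b, hence so does
   a = c^(m!). Thus the generators of R commute, R is abelian, and being
   generated by radicable subgroups it is radicable. *)

Lemma pigeonhole_rel (X : eqType) (Q : nat -> X -> Prop) (s : seq X) :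
  (forall i, exists2 t, t \in s & Q i t) ->
  exists i j t, [/\ i < j, j <= size s, Q i t & Q j t].
Proof.
move=> HQ.
have HQ' i : exists t, t \in s /\ Q i t by have [t] := HQ i; exists t.
pose f i := proj1_sig (constructive_indefinite_description _ (HQ' i)).
have Hf i : f i \in s /\ Q i (f i).
  exact: proj2_sig (constructive_indefinite_description _ (HQ' i)).
have : ~~ uniq (mkseq f (size s).+1).
  apply/negP => uniq_f.
  have sub_f : {subset mkseq f (size s).+1 <= s}.
    by move=> y /mapP [i _ ->]; exact: (Hf i).1.
  by have := uniq_leq_size uniq_f sub_f; rewrite size_mkseq ltnn.
case/(uniqPn (f 0)) => i [j [lt_ij]]; rewrite size_mkseq => le_js.
rewrite !nth_mkseq ?(ltn_trans lt_ij) // => eq_f.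
exists i, j, (f i); split => //; first exact: (Hf i).2.
by rewrite eq_f; exact: (Hf j).2.
Qed.

Section Subgroups.
Variable T : groupType.
Implicit Types (A B H R D : T -> Prop) (x y z g : T).

Lemma generated_subgroup A : is_subgroup (generated A).
Proof.
split=> [H [] // | x y Gx Gy H HH HA | x Gx H HH HA].
- by have [_ HM _] := HH; apply: HM; [exact: Gx | exact: Gy].
- by have [_ _ HV] := HH; apply: HV; exact: Gx.
Qed.

Lemma sub_generated A x : A x -> generated A x.
Proof. by move=> Ax H _; apply. Qed.

Lemma generated_min A H :
  is_subgroup H -> Defs.subset A H -> Defs.subset (generated A) H.
Proof. by move=> HH HA x; apply. Qed.

Lemma subgroupX H x n : is_subgroup H -> H x -> H (x ^+ n).
Proof.
move=> [H1 HM _] Hx; elim: n => [|n IHn] //.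
by rewrite expgS; exact: HM.
Qed.

Lemma subgroupX_fact H x e m :
  is_subgroup H -> 0 < e <= m -> H (x ^+ e) -> H (x ^+ m`!).
Proof.
move=> HH /andP [e_gt0 le_em] Hxe.
have /dvdnP [q ->] : e %| m`! by rewrite dvdn_fact // e_gt0.
by rewrite mulnC expgnA; exact: subgroupX.
Qed.

Lemma centraliser_subgroup y : is_subgroup (commute y).
Proof.
split; first exact: commute1.
- by move=> u v; exact: commuteM.
- by move=> u; exact: commuteV.
Qed.

Lemma generated_conj A B g :
  (forall a, A a -> generated B (a ^ g)) ->
  forall z, generated A z -> generated B (z ^ g).
Proof.
move=> AB; apply: generated_min => //.
have [G1 GM GV] := generated_subgroup B.
split=> [|u v Gu Gv|u Gu]; first by rewrite conj1g.
- by rewrite conjMg; exact: GM.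
- by rewrite conjVg; exact: GV.
Qed.

Lemma abelian_generated A :
  (forall a b, A a -> A b -> commute a b) -> abelian_subgroup (generated A).
Proof.
move=> commA a b Ga Gb.
have cb_gen u : A u -> commute u b.
  move=> Au; apply: generated_min (centraliser_subgroup u) _ _ Gb.
  by move=> v; exact: commA.
apply: commute_sym; apply: generated_min (centraliser_subgroup b) _ _ Ga.
by move=> u Au; apply: commute_sym; exact: cb_gen.
Qed.

Lemma radicable_generated A :
  abelian_subgroup (generated A) ->
  (forall r a, 0 < r -> A a -> exists y, generated A y /\ y ^+ r = a) ->
  radicable (generated A).
Proof.
move=> abA rootA.
have [G1 GM GV] := generated_subgroup A.
pose S z := generated A z /\
  forall r, 0 < r -> exists y, generated A y /\ y ^+ r = z.
have S_subgroup : is_subgroup S.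
  split=> [|u v [Gu rootu] [Gv rootv]|u [Gu rootu]].
  - by split=> // r _; exists 1; rewrite expg1n.
  - split=> [|r r_gt0]; first exact: GM.
    have [y [Gy <-]] := rootu r r_gt0; have [w [Gw <-]] := rootv r r_gt0.
    by exists (y * w); rewrite expgMn; [split=> //; exact: GM | exact: abA].
  - split=> [|r r_gt0]; first exact: GV.
    have [y [Gy <-]] := rootu r r_gt0.
    by exists y^-1; rewrite expVgn; split=> //; exact: GV.
have AS : Defs.subset A S.
  by move=> a Aa; split=> [|r r_gt0]; [exact: sub_generated | exact: rootA].
by move=> r a r_gt0 /(generated_min S_subgroup AS) [_]; apply.
Qed.

Lemma normal_generated A :
  (forall g a, A a -> A (a ^ g)) -> normal_subgroup (generated A).
Proof.
move=> AJ; split; first exact: generated_subgroup.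
by move=> g z; apply: generated_conj => a Aa; apply: sub_generated; exact: AJ.
Qed.

Lemma finite_index_expg_fact H R :
  is_subgroup H -> is_subgroup R -> finite_index R H ->
  exists m, forall z, H z -> R (z ^+ m`!).
Proof.
move=> HH RR [s cover_s]; exists (size s) => z Hz.
have cosets i : exists2 t, t \in s & R (t^-1 * z ^+ i).
  by have [t []] := cover_s _ (subgroupX i HH Hz); exists t.
have [i [j [t [lt_ij le_js Rti Rtj]]]] := pigeonhole_rel cosets.
apply: (subgroupX_fact (e := j - i)) => //.
  by rewrite subn_gt0 lt_ij (leq_trans (leq_subr i j)).
have [_ RM RV] := RR; have := RM _ _ (RV _ Rti) Rtj.
have -> : z ^+ j = z ^+ i * z ^+ (j - i) by rewrite -expgnDr subnKC // ltnW.
by rewrite (mulgA t^-1) mulKg.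
Qed.

Lemma radicable_sub_finite_index H R D :
  is_subgroup H -> is_subgroup R -> finite_index R H ->
  Defs.subset D H -> radicable D -> Defs.subset D R.
Proof.
move=> HH RR finRH DH radD d Dd.
have [m powR] := finite_index_expg_fact HH RR finRH.
have [y [Dy <-]] := radD _ _ (fact_gt0 m) Dd.
exact/powR/DH.
Qed.

Lemma chernikov_radicable_part_conj H R H' R' g :
  is_subgroup H' ->
  chernikov_radicable_part H R -> chernikov_radicable_part H' R' ->
  (forall z, H z -> H' (z ^ g)) -> forall u, R u -> R' (u ^ g).
Proof.
move=> HH' [[_ RH _] _ radR _ _] [[RR' _ _] _ _ _ finR'H'] HJ u Ru.
apply: (@radicable_sub_finite_index H' R' (fun z => R (z ^ g^-1))) => //.
- by move=> z Rz; rewrite -(conjgKV g z); exact/HJ/RH.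
- move=> r d r_gt0 Rd; have [y [Ry yd]] := radR r _ r_gt0 Rd.
  by exists (y ^ g); rewrite conjgK -conjXg yd conjgKV.
- by rewrite conjgK.
Qed.

End Subgroups.

Section CommutatorSubgroup.
Variables (T : groupType) (N : T -> Prop).
Hypothesis normalN : normal_subgroup N.

Lemma conjg_commgE (b a x : T) : [~ b, x] ^ a = [~ b * a, x] * [~ a, x]^-1.
Proof. by rewrite /commg /conjg !invgM !invgK !mulgA !mulgK. Qed.

Lemma commN_sub x : Defs.subset (commN N x) N.
Proof.
have [[_ NM NV] NJ] := normalN.
apply: generated_min => [|_ [a [Na ->]]]; first by case: normalN.
by rewrite commgEl; apply: NM; [exact: NV | exact: NJ].
Qed.

Lemma commN_conj x g z : commN N x z -> commN N (x ^ g) (z ^ g).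
Proof.
apply: generated_conj => _ [a [Na ->]]; apply: sub_generated.
by exists (a ^ g); rewrite conjRg; split=> //; exact: normalN.2.
Qed.

Lemma commN_normalised x a z : N a -> commN N x z -> commN N x (z ^ a).
Proof.
have [[_ NM _] _] := normalN; move=> Na.
apply: generated_conj => _ [b [Nb ->]]; rewrite conjg_commgE.
have [_ GM GV] := generated_subgroup (fun c => exists a, N a /\ c = [~ a, x]).
apply: GM; first by apply: sub_generated; exists (b * a); split=> //; exact: NM.
by apply: GV; apply: sub_generated; exists a.
Qed.

End CommutatorSubgroup.

Lemma pPowerRoot1 p : pPowerRoot p 1%R.
Proof. by exists 0; rewrite expr1n. Qed.

Lemma pPowerRootM p z w :
  pPowerRoot p z -> pPowerRoot p w -> pPowerRoot p (z * w)%R.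
Proof.
move=> [a za] [b wb]; exists (a + b).
rewrite exprMn expnD exprM za expr1n mul1r.
by rewrite mulnC exprM wb expr1n.
Qed.

Lemma pPowerRootX p z n : pPowerRoot p z -> pPowerRoot p (z ^+ n)%R.
Proof.
move=> pz; elim: n => [|n IHn]; first exact: pPowerRoot1.
by rewrite exprS; exact: pPowerRootM.
Qed.

Section PruferEmbedding.
Variables (T : groupType) (p : nat) (phi : algC -> T).
Hypothesis phiM : forall z w, pPowerRoot p z -> pPowerRoot p w ->
  phi (z * w)%R = phi z * phi w.

Lemma prufer_embedding1 : phi 1%R = 1.
Proof.
apply: (@mulgI _ (phi 1%R)).
by rewrite mulg1 -phiM ?mul1r //; exact: pPowerRoot1.
Qed.

Lemma prufer_embeddingX z n : pPowerRoot p z -> phi (z ^+ n)%R = phi z ^+ n.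
Proof.
move=> pz; elim: n => [|n IHn]; first exact: prufer_embedding1.
by rewrite exprS phiM ?IHn ?expgS //; exact: pPowerRootX.
Qed.

End PruferEmbedding.

Section Prufer.
Variables (T : groupType) (p : nat) (P : T -> Prop).
Hypothesis pruferP : prufer p P.

Lemma prufer1 : P 1.
Proof.
have [_ [phi [_ phiM inP _]]] := pruferP.
by rewrite -(prufer_embedding1 phiM); apply: inP; exact: pPowerRoot1.
Qed.

Lemma pruferX u n : P u -> P (u ^+ n).
Proof.
have [_ [phi [_ phiM inP onto]]] := pruferP.
move=> /onto [z pz <-]; rewrite -(prufer_embeddingX phiM _ pz).
by apply: inP; exact: pPowerRootX.
Qed.

(* The elements of order dividing n are images of roots of 'X^n - 1. *)
Lemma prufer_torsion_finite n :
  0 < n -> exists s : seq T, forall u, P u -> u ^+ n = 1 -> u \in s.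
Proof.
have [_ [phi [phi_inj phiM _ onto]]] := pruferP.
move=> n_gt0.
have [rs def_poly] := closed_field_poly_normal ('X^n - 1%:P : {poly algC})%R.
rewrite (monicP (monicXnsubC 1%R n_gt0)) scale1r in def_poly.
exists (map phi rs) => u /onto [z pz <-] zn1; apply: map_f.
have z_root : (z ^+ n)%R = 1%R.
  apply: phi_inj; [exact: pPowerRootX | exact: pPowerRoot1 |].
  by rewrite (prufer_embeddingX phiM) // zn1 (prufer_embedding1 phiM).
by rewrite -root_prod_XsubC -def_poly /root !hornerE z_root subrr.
Qed.

End Prufer.

Section DirectProduct.
Variable T : groupType.
Implicit Types (f : nat -> T) (y : T).

Lemma commute_gprod k f y :
  (forall i, i < k -> commute y (f i)) -> commute y (gprod k f).
Proof.
elim: k => [|k IHk] cf /=; first exact: commute1.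
by apply: commuteM; [apply: IHk => i /ltnW; exact: cf | exact: cf].
Qed.

Lemma gprodXn k f n :
  (forall i j, i < k -> j < k -> commute (f i) (f j)) ->
  gprod k f ^+ n = gprod k (fun i => f i ^+ n).
Proof.
elim: k => [|k IHk] cf /=; first exact: expg1n.
rewrite expgMn ?IHk // => [i j /ltnW ? /ltnW ?|]; first exact: cf.
by apply: commute_sym; apply: commute_gprod => i /ltnW ?; exact: cf.
Qed.

Lemma gprod1 k : gprod k (fun=> 1 : T) = 1.
Proof. by elim: k => //= k ->; rewrite mulg1. Qed.

Lemma dprod_prufer_torsion_finite R n : dprod_prufer R -> 0 < n ->
  exists s : seq T, forall z, R z -> z ^+ n = 1 -> z \in s.
Proof.
move=> [k [ps [P [pruferP commP defR uniqR]]]] n_gt0.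
have prefix_products j : j <= k -> exists s : seq T, forall f,
    (forall i, i < j -> P i (f i) /\ f i ^+ n = 1) -> gprod j f \in s.
  elim: j => [|j IHj] le_jk; first by exists [:: 1] => f _; rewrite inE.
  have [s Hs] := IHj (ltnW le_jk).
  have [sj Hsj] := prufer_torsion_finite (pruferP j le_jk) n_gt0.
  exists [seq u * v | u <- s, v <- sj] => f Pf; apply: allpairs_f.
    by apply: Hs => i /ltnW; exact: Pf.
  by have [] := Pf j (ltnSn j); exact: Hsj.
have [s Hs] := prefix_products k (leqnn k).
exists s => z /defR [f [Pf ->]] zn1.
have cf i j : i < k -> j < k -> commute (f i) (f j).
  move=> lt_ik lt_jk; have [->|/eqP neq_ij] := eqVneq i j.
    exact: commute_refl.
  exact: commP lt_ik lt_jk neq_ij (Pf i lt_ik) (Pf j lt_jk).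
have fn1 i : i < k -> f i ^+ n = 1.
  apply: (uniqR (fun i => f i ^+ n) (fun=> 1)) => [j lt_jk|j lt_jk|].
  - exact (pruferX (pruferP j lt_jk) n (Pf j lt_jk)).
  - exact: prufer1 (pruferP j lt_jk).
  - by rewrite gprod1 -gprodXn.
by apply: Hs => i lt_ik; split; [exact: Pf | exact: fn1].
Qed.

End DirectProduct.

Section RadicableParts.
Variables (T : groupType) (N : T -> Prop) (Rx : T -> T -> Prop).
Hypotheses (periodicT : periodic_group T) (normalN : normal_subgroup N).
Hypothesis chernikovRx : forall x, chernikov_radicable_part (commN N x) (Rx x).

Lemma Rx_sub_commN x : Defs.subset (Rx x) (commN N x).
Proof. by have [[]] := chernikovRx x. Qed.

Lemma Rx_conj x g u : Rx x u -> Rx (x ^ g) (u ^ g).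
Proof.
apply: (chernikov_radicable_part_conj _ (chernikovRx x) (chernikovRx (x ^ g)))
  => [|z]; [exact: generated_subgroup | exact: commN_conj].
Qed.

Lemma Rx_normalised x y a u : Rx x a -> Rx y u -> Rx y (u ^ a).
Proof.
move=> Ra.
apply: (chernikov_radicable_part_conj _ (chernikovRx y) (chernikovRx y))
  => [|z]; first exact: generated_subgroup.
exact (commN_normalised normalN (commN_sub normalN (Rx_sub_commN Ra))).
Qed.

Lemma Rx_commute x y a b : Rx x a -> Rx y b -> commute a b.
Proof.
move=> Ra Rb; have [n [n_gt0 bn1]] := periodicT b.
have [[RxG _ _] _ radRx _ _] := chernikovRx x.
have [_ _ _ dprodRy _] := chernikovRx y.
have [s torsion_s] := dprod_prufer_torsion_finite dprodRy n_gt0.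
have [c [Rc <-]] := radRx _ _ (fact_gt0 (size s)) Ra.
have orbit i : exists2 t, t \in s & t = b ^ (c ^+ i).
  exists (b ^ (c ^+ i)) => //; apply: torsion_s.
    exact: Rx_normalised (subgroupX i RxG Rc) Rb.
  by rewrite -conjXg bn1 conj1g.
have [i [j [_ [lt_ij le_js -> eq_ij]]]] := pigeonhole_rel orbit.
have cb : commute b (c ^+ (j - i)).
  apply/commgP/conjg_fixP/(conjg_inj (c ^+ i)).
  by rewrite -conjgM -expgnDr subnK // ltnW.
apply/commute_sym/(subgroupX_fact (centraliser_subgroup b) _ cb).
by rewrite subn_gt0 lt_ij (leq_trans (leq_subr i j)).
Qed.

End RadicableParts.

Theorem lemma2p4 (T : groupType) (N : T -> Prop) (Rx : T -> T -> Prop) :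
  periodic_group T ->
  normal_subgroup N ->
  (forall x : T, chernikov_radicable_part (commN N x) (Rx x)) ->
  let R := generated (fun y => exists x, Rx x y) in
  [/\ is_subgroup R, radicable R, abelian_subgroup R & normal_subgroup R].
Proof.
move=> periodicT normalN chernikovRx R.
have abelianR : abelian_subgroup R.
  apply: abelian_generated => a b [x Ra] [y Rb].
  exact: Rx_commute periodicT normalN chernikovRx _ _ _ _ Ra Rb.
split=> //; first exact: generated_subgroup.
- apply: radicable_generated => // r a r_gt0 [x Ra].
  have [_ _ radRx _ _] := chernikovRx x.
  have [y [Ry <-]] := radRx r a r_gt0 Ra.
  by exists y; split=> //; apply: sub_generated; exists x.
- apply: normal_generated => g a [x Ra]; exists (x ^ g).
  exact: Rx_conj normalN chernikovRx _ _ _ Ra.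
Qed.
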